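(* Let $n,d$ be positive integers and let $\mathcal T_n$ be the triangular Ferrers diagram with column heights $(n,n-1,\dots,2,1)$. Then $(\mathcal T_n,d)$ is irreducible if and only if $d\le n\le 2d-3$.
   Context: A Ferrers diagram is a finite $\mathcal D\subseteq\{1,2,\dots\}^2$ such that $(x,y)\in\mathcal D$ implies $(i,j)\in\mathcal D$ for all $1\le i\le x$, $1\le j\le y$ (first coordinate = row). With column heights $c_i=|\mathcal D\cap(\mathbb N\times\{i\})|$, $\nu_j(\mathcal D,d)=\sum_{i\ge j+1}\max\{0,c_i-d+j\}$ for $0\le j\le d-1$ and $\nu_{\min}(\mathcal D,d)=\min_j\nu_j(\mathcal D,d)$. A point $P\in\mathcal D$ is removable if $\mathcal D\setminus\{P\}$ is a Ferrers diagram. For $\mathcal D'=\mathcal D\setminus\{P\}$ with $P$ removable, write $\mathcal D'\xrightarrow{d}\mathcal D$ if $\nu_{\min}(\mathcal D',d)=\nu_{\min}(\mathcal D,d)$ and $\mathcal D\xrightarrow{d}\mathcal D'$ otherwise. $(\mathcal D,d)$ is irreducible if there is no Ferrers diagram $\mathcal D'$ with $\mathcal D'\xrightarrow{d}\mathcal D$. *)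

From HB Require Import structures.
From mathcomp Require Import all_boot all_order.
From mathcomp Require Import finmap.
Set Implicit Arguments. Unset Strict Implicit. Unset Printing Implicit Defensive.
Local Open Scope fset_scope.

(* A point is (row, column); a diagram is a finite set of points. *)
Definition diagram := {fset (nat * nat)}.

Definition is_ferrers (D : diagram) : Prop :=
  (forall p, p \in D -> 0 < p.1 /\ 0 < p.2) /\
  (forall p, p \in D -> forall i j, 1 <= i <= p.1 -> 1 <= j <= p.2 -> (i, j) \in D).

Definition colh (D : diagram) (i : nat) : nat := #|` [fset p in D | p.2 == i] |.

Definition maxcol (D : diagram) : nat := \max_(p <- enum_fset D) p.2.

(* nu_j(D,d) = sum_{i >= j+1} max{0, c_i - (d-1-j)};
   in nat, max{0, c - d + j + 1} is the truncated difference (c + j.+1 - d).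
   Columns beyond maxcol D are empty and contribute 0. *)
Definition nu (D : diagram) (d j : nat) : nat :=
  \sum_(j.+1 <= i < (maxcol D).+1) (colh D i + j.+1 - d).

(* nu_min(D,d) = min_{0 <= j <= d-1} nu_j(D,d)  (used for d >= 1) *)
Definition numin (D : diagram) (d : nat) : nat :=
  \big[minn/nu D d 0]_(j < d) nu D d j.

Definition removable (D : diagram) (P : nat * nat) : Prop :=
  P \in D /\ is_ferrers (D `\ P).

(* arrow d A B  means  A ->_d B.  For D' = D \ {P} with P removable:
   D' ->_d D if nu_min(D',d) = nu_min(D,d), and D ->_d D' otherwise. *)
Definition arrow (d : nat) (A B : diagram) : Prop :=
  (exists P, removable B P /\ A = B `\ P /\ numin A d = numin B d) \/
  (exists P, removable A P /\ B = A `\ P /\ numin B d <> numin A d).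

Definition irreducible (D : diagram) (d : nat) : Prop :=
  ~ (exists D' : diagram, is_ferrers D' /\ arrow d D' D).

Definition Tn (n : nat) : diagram :=
  [fset p | p in [seq (x, y) | y <- iota 1 n, x <- iota 1 (n.+1 - y)]].

From mathcomp Require Import all_boot all_order.
From mathcomp Require Import finmap zify.
Set Implicit Arguments. Unset Strict Implicit. Unset Printing Implicit Defensive.
Local Open Scope fset_scope.
Local Open Scope nat_scope.
Import Order.TTheory.

(* Consecutive columns of the staircase T_n differ in height by one, so shifting
   the summation index by j shows that the numbers nu_j(T_n, d), j < d, are all
   equal.  Deleting a point from column b, of height a, lowers nu_j by one
   exactly when j < b and d <= a + j.  Removing the corner (a, b), a + b = n + 1,
   of T_n therefore lowers nu_min iff j = d - a qualifies, i.e. iff d <= n.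
   Adding a corner (a, b), a + b = n + 2, raises nu_min iff it raises every nu_j,
   j < d, i.e. iff d <= a and d <= b, and such a corner exists iff 2d <= n + 2. *)

Lemma sum_nat_widen m K K' (F : nat -> nat) :
  K <= K' -> (forall i, K <= i -> F i = 0) ->
  \sum_(m <= i < K') F i = \sum_(m <= i < K) F i.
Proof.
move=> le_KK' F0; rewrite [RHS](big_nat_widen _ _ _ _ _ le_KK') big_mkcondr /=.
by apply: eq_bigr => i _; case: ltnP => // /F0.
Qed.

Lemma maxcolP (D : diagram) p : p \in D -> p.2 <= maxcol D.
Proof. by move=> p_in; apply: leq_bigmax_seq. Qed.

Lemma colh_gt_maxcol (D : diagram) i : maxcol D < i -> colh D i = 0.
Proof.
move=> lt_i; apply/eqP; rewrite cardfs_eq0; apply/eqP/fsetP => p; rewrite !inE.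
by apply/negbTE/andP => -[/maxcolP le_p /eqP eq_i]; lia.
Qed.

Lemma colh_eq (D : diagram) i h :
  (forall x, (x, i) \in D <-> 0 < x <= h) -> colh D i = h.
Proof.
move=> memD; rewrite /colh.
have -> : [fset p in D | p.2 == i] = [fset p in [seq (x, i) | x <- iota 1 h]].
  apply/fsetP => -[x y]; rewrite !inE /=; apply/andP/mapP.
    move=> [xy_in /eqP y_i]; rewrite y_i in xy_in.
    by exists x; rewrite ?y_i ?mem_iota //; move/memD: xy_in; lia.
  by move=> [x' + [-> ->]]; rewrite mem_iota => x'_in; split=> //; apply/memD; lia.
rewrite card_fseq undup_id ?size_map ?size_iota //.
by rewrite map_inj_uniq ?iota_uniq // => x1 x2 [].
Qed.

Lemma colh_fsetD1 (D : diagram) p i :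
  colh D i = ((p \in D) && (p.2 == i)) + colh (D `\ p) i.
Proof.
rewrite /colh; have -> : [fset q in D `\ p | q.2 == i] = [fset q in D | q.2 == i] `\ p.
  by apply/fsetP => q; rewrite !inE andbA.
by rewrite (cardfsD1 p) inE.
Qed.

Lemma nu_widen (D : diagram) d j K : j < d ->
  (forall i, K <= i -> colh D i = 0) ->
  nu D d j = \sum_(j.+1 <= i < K) (colh D i + j.+1 - d).
Proof.
move=> lt_jd colh0; rewrite /nu.
have vanish M : (forall i, M <= i -> colh D i = 0) ->
    forall i, M <= i -> colh D i + j.+1 - d = 0.
  by move=> colhM0 i /colhM0 ->; lia.
rewrite -(sum_nat_widen _ (leq_maxl (maxcol D).+1 K)); last first.
  by apply: vanish => i; apply: colh_gt_maxcol.
by rewrite (sum_nat_widen _ (leq_maxr (maxcol D).+1 K)) //; apply: vanish.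
Qed.

Lemma nu_fsetD1 (D : diagram) p d j : j < d -> p \in D ->
  nu D d j = nu (D `\ p) d j + ((j < p.2) && (d <= colh D p.2 + j)).
Proof.
move=> lt_jd p_in; set b := p.2.
have colh_off i : i != b -> colh (D `\ p) i = colh D i.
  by move=> ne_ib; rewrite [in RHS](colh_fsetD1 D p i) eq_sym (negbTE ne_ib) andbF.
have colh_b : colh D b = (colh (D `\ p) b).+1 by rewrite (colh_fsetD1 D p b) p_in eqxx.
set K := (maxn b (maxcol D)).+1.
have D0 i : K <= i -> colh D i = 0 by move=> ?; apply: colh_gt_maxcol; lia.
have Dp0 i : K <= i -> colh (D `\ p) i = 0 by move/D0; rewrite (colh_fsetD1 D p i); lia.
rewrite (nu_widen lt_jd D0) (nu_widen lt_jd Dp0).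
case: (ltnP j b) => [lt_jb | le_bj] /=.
  have b_in : b \in index_iota j.+1 K by rewrite mem_index_iota; lia.
  rewrite !(bigD1_seq b) ?/index_iota ?iota_uniq //=.
  under [in RHS]eq_bigr => i ne_ib do rewrite colh_off //.
  rewrite colh_b; lia.
rewrite addn0; apply: eq_big_nat => i /andP[lt_ji _].
by rewrite colh_off //; lia.
Qed.

Lemma numin_le (D : diagram) d j : j < d -> numin D d <= nu D d j.
Proof.
by move=> lt_jd; have := bigmin_le (nu D d 0) (Ordinal lt_jd) (fun i : 'I_d => nu D d i).
Qed.

Lemma numin_ge (D : diagram) d m :
  0 < d -> (forall j, j < d -> m <= nu D d j) -> m <= numin D d.
Proof.
move=> d_gt0 le_m.
by apply/(bigmin_geP _ m xpredT (fun i : 'I_d => nu D d i)); split=> [|i _]; apply: le_m.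
Qed.

Lemma numin_const (D : diagram) d m :
  0 < d -> (forall j, j < d -> nu D d j = m) -> numin D d = m.
Proof.
move=> d_gt0 nu_m; apply/eqP; rewrite eqn_leq -{1}(nu_m 0 d_gt0) numin_le //=.
by apply: numin_ge => // j /nu_m ->.
Qed.

Lemma irreducibleP (D : diagram) d :
  irreducible D d <->
  (forall P, removable D P -> numin (D `\ P) d != numin D d) /\
  (forall D' P, is_ferrers D' -> removable D' P -> D' `\ P = D ->
     numin D' d = numin D d).
Proof.
split=> [irr | [rem_lowers add_keeps] [D' [D'_ferrers arr]]].
  split=> [P P_rem | D' P D'_ferrers P_rem D'_P].
    apply/eqP => eq_numin; apply: irr; exists (D `\ P); split; first exact: P_rem.2.
    by left; exists P.
  apply/eqP/negPn/negP => /eqP ne_numin; apply: irr; exists D'; split=> //.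
  by right; exists P; split=> //; split=> // eq_numin; apply: ne_numin.
case: arr => [[P [P_rem [-> eq_numin]]] | [P [P_rem [D_D'P ne_numin]]]].
  by move: (rem_lowers P P_rem); rewrite eq_numin eqxx.
by apply: ne_numin; rewrite (add_keeps D' P) // D_D'P.
Qed.

Lemma mem_Tn n x y : ((x, y) \in Tn n) = [&& 0 < x, 0 < y & x + y <= n.+1].
Proof.
rewrite /Tn in_fset; apply/allpairsPdep/idP => [[y' [x' []]] | xy_in].
  by rewrite !mem_iota => ? ? [-> ->]; lia.
by exists y, x; rewrite !mem_iota; split=> //; lia.
Qed.

Lemma colh_Tn n i : 0 < i -> colh (Tn n) i = n.+1 - i.
Proof. by move=> i_gt0; apply: colh_eq => x; rewrite mem_Tn; lia. Qed.

Lemma nu_Tn n d j : j < d -> nu (Tn n) d j = \sum_(1 <= i < n.+2) (n.+2 - i - d).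
Proof.
move=> lt_jd; rewrite (@nu_widen _ _ _ (n.+2 + j)) //; last first.
  by move=> i le_i; rewrite colh_Tn; lia.
rewrite -[j.+1]/(1 + j) big_addn addnK.
by apply: eq_big_nat => i /andP[i_gt0 _]; rewrite colh_Tn; lia.
Qed.

Lemma numin_Tn n d : 0 < d -> numin (Tn n) d = \sum_(1 <= i < n.+2) (n.+2 - i - d).
Proof. by move=> d_gt0; apply: numin_const => // j; apply: nu_Tn. Qed.

Lemma is_ferrers_Tn n : is_ferrers (Tn n).
Proof.
split=> [[x y] | [x y] + i j]; rewrite mem_Tn /=; first lia.
by move=> xy_in /andP[? ?] /andP[? ?]; rewrite mem_Tn; lia.
Qed.

Lemma removable_Tn_corner n a b :
  0 < a -> 0 < b -> a + b = n.+1 -> removable (Tn n) (a, b).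
Proof.
move=> a_gt0 b_gt0 ab; split; first by rewrite mem_Tn; lia.
split=> [[x y] | [x y] + i j]; rewrite in_fsetD1 mem_Tn xpair_eqE /=; first lia.
by move=> xy_in /andP[? ?] /andP[? ?]; rewrite in_fsetD1 mem_Tn xpair_eqE; lia.
Qed.

Lemma removable_TnP n a b :
  removable (Tn n) (a, b) -> [/\ 0 < a, 0 < b & a + b = n.+1].
Proof.
rewrite /removable mem_Tn => -[/and3P[a_gt0 b_gt0 le_ab] [_ down]].
split=> //; apply/eqP; rewrite eqn_leq le_ab /= ltnNge; apply/negP => lt_ab.
have below : (a.+1, b) \in Tn n `\ (a, b) by rewrite in_fsetD1 mem_Tn xpair_eqE; lia.
by have := down _ below a b; rewrite in_fsetD1 eqxx /=; lia.
Qed.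

Lemma is_ferrers_Tn_fset1U n a b :
  0 < a -> 0 < b -> a + b = n.+2 -> is_ferrers ((a, b) |` Tn n).
Proof.
move=> a_gt0 b_gt0 ab.
split=> [[x y] | [x y] + i j]; rewrite in_fset1U mem_Tn xpair_eqE /=; first lia.
by move=> xy_in /andP[? ?] /andP[? ?]; rewrite in_fset1U mem_Tn xpair_eqE; lia.
Qed.

Lemma extension_TnP n (D : diagram) a b :
  is_ferrers D -> (a, b) \in D -> D `\ (a, b) = Tn n ->
  [/\ 0 < a, 0 < b & a + b = n.+2].
Proof.
move=> [pos down] ab_in D_ab; have [/= a_gt0 b_gt0] := pos _ ab_in.
have below x y : 0 < x <= a -> 0 < y <= b -> x + y < a + b -> x + y <= n.+1.
  move=> x_le y_le lt_xy; have : (x, y) \in D `\ (a, b).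
    by rewrite in_fsetD1 xpair_eqE (down _ ab_in) //; lia.
  by rewrite D_ab mem_Tn => /and3P[].
have : (a, b) \notin Tn n by rewrite -D_ab in_fsetD1 eqxx.
rewrite mem_Tn a_gt0 b_gt0 /= -ltnNge => gt_ab; split=> //.
case: (ltnP 1 a) => [a_gt1 | a_le1]; first by have := below a.-1 b; lia.
case: (ltnP 1 b) => [b_gt1 | b_le1]; first by have := below a b.-1; lia.
lia.
Qed.

Lemma numin_Tn_fsetD1 n d a b : 0 < d -> 0 < a -> 0 < b -> a + b = n.+1 ->
  (numin (Tn n `\ (a, b)) d == numin (Tn n) d) = (n < d).
Proof.
move=> d_gt0 a_gt0 b_gt0 ab; rewrite numin_Tn //.
set S := \sum_(1 <= i < n.+2) _.
have ab_in : (a, b) \in Tn n by rewrite mem_Tn; lia.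
have colh_b : colh (Tn n) b = a by rewrite colh_Tn //; lia.
have nu_lower j : j < d ->
    S = nu (Tn n `\ (a, b)) d j + ((j < b) && (d <= a + j)).
  by move=> lt_jd; have := nu_Tn n lt_jd; rewrite (nu_fsetD1 lt_jd ab_in) colh_b => ->.
case: ltnP => [lt_nd | le_dn].
  by apply/eqP/numin_const => // j lt_jd; have := nu_lower j lt_jd; lia.
have lt_ja : d - a < d by lia.
apply/negbTE/eqP => eq_S.
by have := numin_le (Tn n `\ (a, b)) lt_ja; have := nu_lower _ lt_ja; lia.
Qed.

Lemma numin_Tn_extension n (D : diagram) d a b :
  0 < d -> 0 < a -> 0 < b -> a + b = n.+2 ->
  (a, b) \in D -> D `\ (a, b) = Tn n ->
  (numin D d == numin (Tn n) d) = ~~ ((d <= a) && (d <= b)).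
Proof.
move=> d_gt0 a_gt0 b_gt0 ab ab_in D_ab; rewrite numin_Tn //.
set S := \sum_(1 <= i < n.+2) _.
have colh_b : colh D b = a.
  by rewrite (colh_fsetD1 D (a, b)) ab_in eqxx D_ab colh_Tn //; lia.
have nu_upper j : j < d -> nu D d j = S + ((j < b) && (d <= a + j)).
  by move=> lt_jd; rewrite (nu_fsetD1 lt_jd ab_in) D_ab colh_b nu_Tn.
case: (boolP ((d <= a) && (d <= b))) => [/andP[le_da le_db] | small_corner] /=.
  rewrite (@numin_const _ _ S.+1) // => [|j lt_jd]; first lia.
  by rewrite nu_upper //; lia.
have [j0 lt_j0d nu_j0] : exists2 j, j < d & nu D d j = S.
  by move: small_corner; rewrite negb_and -!ltnNge => /orP[lt_ad | lt_bd];
    [exists 0 | exists b]; rewrite ?nu_upper //; lia.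
rewrite eqn_leq -{1}nu_j0 numin_le //=.
by apply: numin_ge => // j /nu_upper ->; apply: leq_addr.
Qed.

Theorem proposition4p22 (n d : nat) :
  0 < n -> 0 < d -> (irreducible (Tn n) d <-> d <= n <= 2 * d - 3).
Proof.
move=> n_gt0 d_gt0; rewrite irreducibleP; split=> [[rem_lowers add_keeps] | ].
  apply/andP; split.
    have := rem_lowers _ (removable_Tn_corner n_gt0 (ltn0Sn 0) (addn1 n)).
    by rewrite numin_Tn_fsetD1 // ?addn1 // -leqNgt.
  rewrite leqNgt; apply/negP => lt_2d3_n; set a := n.+2 - d.
  have ad_notin : (a, d) \notin Tn n by rewrite mem_Tn; lia.
  have ad_ferrers : is_ferrers ((a, d) |` Tn n) by apply: is_ferrers_Tn_fset1U; lia.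
  have ad_removable : removable ((a, d) |` Tn n) (a, d).
    by split; [exact: fset1U1 | rewrite fsetU1K //; exact: is_ferrers_Tn].
  have /eqP := add_keeps _ _ ad_ferrers ad_removable (fsetU1K ad_notin).
  by rewrite (numin_Tn_extension (a := a) (b := d)) ?fset1U1 ?fsetU1K //; lia.
move=> /andP[le_dn le_n]; split=> [[a b] /removable_TnP [a_gt0 b_gt0 ab] | ].
  by rewrite numin_Tn_fsetD1 // -leqNgt.
move=> D [a b] D_ferrers [ab_in _] D_ab.
have [a_gt0 b_gt0 ab] := extension_TnP D_ferrers ab_in D_ab.
by apply/eqP; rewrite (numin_Tn_extension _ _ _ ab ab_in D_ab) //; lia.
Qed.
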